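(* Let $(t,\eta,\mu)$ be a polynomial monad, i.e. a monoid in $(\mathbf{Poly},\mathcal{y},\triangleleft)$. For sets $A,B$ put $h^t_{A,B}:=[A\mathcal{y},\, t\triangleleft B\mathcal{y}]\in\mathbf{Poly}$. Then the Kleisli category $\mathbf{Set}_t$ is enriched in $(\mathbf{Poly},\mathcal{y},\otimes)$: there is a $(\mathbf{Poly},\mathcal{y},\otimes)$-enriched category whose objects are sets, whose hom-objects are the polynomials $h^t_{A,B}$ (with identities induced by $A\mathcal{y}\cong\mathcal{y}\triangleleft A\mathcal{y}\xrightarrow{\eta\triangleleft A\mathcal{y}} t\triangleleft A\mathcal{y}$ and a unital, associative composition $h^t_{A,B}\otimes h^t_{B,C}\to h^t_{A,C}$), and whose underlying ordinary category (obtained by applying $\mathbf{Poly}(\mathcal{y},-)$ to hom-objects) is $\mathbf{Set}_t$; in particular $\mathbf{Poly}(\mathcal{y},h^t_{A,B})\cong\mathbf{Set}_t(A,B)$.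
   Context: $\mathbf{Poly}$ is the category of polynomial functors $\mathbf{Set}\to\mathbf{Set}$, i.e. functors of the form $p=\sum_{i\in p(1)}\mathcal{y}^{p[i]}$ where $\mathcal{y}^X=\mathrm{Hom}_{\mathbf{Set}}(X,-)$, with natural transformations as morphisms. $\triangleleft$ denotes composition of polynomial functors ($p\triangleleft q = p\circ q$, unit $\mathcal{y}$); $\otimes$ is the Dirichlet (parallel) product $p\otimes q=\sum_{(i,j)\in p(1)\times q(1)}\mathcal{y}^{p[i]\times q[j]}$ with unit $\mathcal{y}$; $[-,-]$ denotes the internal hom of $(\mathbf{Poly},\otimes)$, so maps $r\otimes p\to q$ correspond to maps $r\to[p,q]$. For a set $A$, $A\mathcal{y}=\sum_{a\in A}\mathcal{y}$. The Kleisli category $\mathbf{Set}_t$ has sets as objects and functions $A\to t(B)$ as morphisms $A\to B$. For a monoidal category $(V,I,\otimes)$, a category $\mathcal{C}$ is said to be enriched in $V$ if there is a $V$-enriched category whose underlying category, obtained by applying the lax monoidal functor $V(I,-)\colon V\to\mathbf{Set}$ to hom-objects, is $\mathcal{C}$. *)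

(* a concrete encoding of the category Poly of polynomial
   functors Set -> Set, following the standard (position, direction)
   presentation.  Sets are modelled by Types. *)
From Stdlib Require Import FunctionalExtensionality.


(** A polynomial p = sum_{i : pos p} y^{dir p i}. *)
Record Poly := mkPoly { pos : Type; dir : pos -> Type }.


(** Morphisms of polynomials (= natural transformations, by Yoneda):
    a map on positions and a backwards map on directions. *)
Record Pmor (p q : Poly) := mkPmor {
  onPos : pos p -> pos q;
  onDir : forall i : pos p, dir q (onPos i) -> dir p i }.
Arguments mkPmor {p q}.
Arguments onPos {p q}.
Arguments onDir {p q}.

Definition pid (p : Poly) : Pmor p p := mkPmor (fun i => i) (fun i e => e).

(** Diagrammatic composition: [Pseq f g] is "first f, then g" = g o f. *)
Definition Pseq {p q r : Poly} (f : Pmor p q) (g : Pmor q r) : Pmor p r :=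
  mkPmor (fun i => onPos g (onPos f i))
         (fun i e => onDir f i (onDir g (onPos f i) e)).

(** The identity polynomial y, and A y = sum_{a : A} y. *)
Definition yP : Poly := mkPoly unit (fun _ => unit).
Definition linP (A : Type) : Poly := mkPoly A (fun _ => unit).

(** Composition product p <| q = p o q. *)
Definition tri (p q : Poly) : Poly :=
  mkPoly {i : pos p & dir p i -> pos q}
         (fun ik => {d : dir p (projT1 ik) & dir q (projT2 ik d)}).

Definition triM {p p' q q' : Poly} (f : Pmor p p') (g : Pmor q q')
  : Pmor (tri p q) (tri p' q') :=
  mkPmor (p := tri p q) (q := tri p' q')
    (fun ik => existT (fun i => dir p' i -> pos q') (onPos f (projT1 ik))
                 (fun d' => onPos g (projT2 ik (onDir f (projT1 ik) d'))))
    (fun ik e => existT (fun d => dir q (projT2 ik d))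
                   (onDir f (projT1 ik) (projT1 e))
                   (onDir g _ (projT2 e))).

Definition triL (p : Poly) : Pmor (tri yP p) p :=
  mkPmor (p := tri yP p) (q := p)
    (fun ik => projT2 ik tt)
    (fun ik e => existT (fun d => dir p (projT2 ik d)) tt e).

Definition triLinv (p : Poly) : Pmor p (tri yP p) :=
  mkPmor (p := p) (q := tri yP p)
    (fun i => existT (fun _ : unit => unit -> pos p) tt (fun _ => i))
    (fun i e => projT2 e).

Definition triR (p : Poly) : Pmor (tri p yP) p :=
  mkPmor (p := tri p yP) (q := p)
    (fun ik => projT1 ik)
    (fun ik d => existT (fun d0 => dir yP (projT2 ik d0)) d tt).

Definition triA (p q r : Poly) : Pmor (tri (tri p q) r) (tri p (tri q r)) :=
  mkPmor (p := tri (tri p q) r) (q := tri p (tri q r))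
    (fun x => existT (fun i => dir p i -> pos (tri q r)) (projT1 (projT1 x))
       (fun d => existT (fun j => dir q j -> pos r) (projT2 (projT1 x) d)
                   (fun e => projT2 x (existT _ d e))))
    (fun x w => existT (fun de => dir r (projT2 x de))
                  (existT (fun d => dir q (projT2 (projT1 x) d))
                     (projT1 w) (projT1 (projT2 w)))
                  (projT2 (projT2 w))).

Record PMonad := {
  mT : Poly;
  mEta : Pmor yP mT;
  mMu : Pmor (tri mT mT) mT;
  mUnitL : Pseq (triM mEta (pid mT)) mMu = triL mT;
  mUnitR : Pseq (triM (pid mT) mEta) mMu = triR mT;
  mAssoc : Pseq (triM mMu (pid mT)) mMu
           = Pseq (triA mT mT mT) (Pseq (triM (pid mT) mMu) mMu) }.

Definition tens (p q : Poly) : Poly :=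
  mkPoly (pos p * pos q) (fun ij => (dir p (fst ij) * dir q (snd ij))%type).

Definition tensM {p p' q q' : Poly} (f : Pmor p p') (g : Pmor q q')
  : Pmor (tens p q) (tens p' q') :=
  mkPmor (p := tens p q) (q := tens p' q')
    (fun ij => (onPos f (fst ij), onPos g (snd ij)))
    (fun ij e => (onDir f (fst ij) (fst e), onDir g (snd ij) (snd e))).

Definition tensL (p : Poly) : Pmor (tens yP p) p :=
  mkPmor (p := tens yP p) (q := p) (fun ij => snd ij) (fun ij d => (tt, d)).

Definition tensR (p : Poly) : Pmor (tens p yP) p :=
  mkPmor (p := tens p yP) (q := p) (fun ij => fst ij) (fun ij d => (d, tt)).

Definition tensA (p q r : Poly) : Pmor (tens (tens p q) r) (tens p (tens q r)) :=
  mkPmor (p := tens (tens p q) r) (q := tens p (tens q r))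
    (fun x => (fst (fst x), (snd (fst x), snd x)))
    (fun x e => ((fst e, fst (snd e)), snd (snd e))).

Definition ydiag : Pmor yP (tens yP yP) :=
  mkPmor (p := yP) (q := tens yP yP) (fun _ => (tt, tt)) (fun _ _ => tt).

Definition ihom (p q : Poly) : Poly :=
  mkPoly (Pmor p q) (fun phi => {i : pos p & dir q (onPos phi i)}).

Definition curry {r p q : Poly} (f : Pmor (tens r p) q) : Pmor r (ihom p q) :=
  mkPmor (p := r) (q := ihom p q)
    (fun i => mkPmor (p := p) (q := q) (fun j => onPos f (i, j))
                     (fun j e => snd (onDir f (i, j) e)))
    (fun i w => fst (onDir f (i, projT1 w) (projT2 w))).

Definition hom (t : PMonad) (A B : Type) : Poly :=
  ihom (linP A) (tri (mT t) (linP B)).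

Definition unitK (t : PMonad) (A : Type) : Pmor (linP A) (tri (mT t) (linP A)) :=
  Pseq (triLinv (linP A)) (triM (mEta t) (pid (linP A))).

Definition encId (t : PMonad) (A : Type) : Pmor yP (hom t A A) :=
  curry (Pseq (tensL (linP A)) (unitK t A)).

Definition CompFam (t : PMonad) : Type :=
  forall A B C : Type, Pmor (tens (hom t A B) (hom t B C)) (hom t A C).

Definition is_enriched {t : PMonad} (comp : CompFam t) : Prop :=
  (forall A B : Type,
      Pseq (tensM (encId t A) (pid (hom t A B))) (comp A A B) = tensL (hom t A B)) /\
  (forall A B : Type,
      Pseq (tensM (pid (hom t A B)) (encId t B)) (comp A B B) = tensR (hom t A B)) /\
  (forall A B C D : Type,
      Pseq (tensM (comp A B C) (pid (hom t C D))) (comp A C D)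
      = Pseq (tensA (hom t A B) (hom t B C) (hom t C D))
             (Pseq (tensM (pid (hom t A B)) (comp B C D)) (comp A B D))).

Definition ucomp {t : PMonad} (comp : CompFam t) {A B C : Type}
  (f : Pmor yP (hom t A B)) (g : Pmor yP (hom t B C)) : Pmor yP (hom t A C) :=
  Pseq ydiag (Pseq (tensM f g) (comp A B C)).

Definition papp (p : Poly) (X : Type) : Type := {i : pos p & dir p i -> X}.

Definition pmapMor {p q : Poly} (f : Pmor p q) {X : Type} (x : papp p X) : papp q X :=
  existT (fun j => dir q j -> X) (onPos f (projT1 x))
         (fun e => projT2 x (onDir f (projT1 x) e)).

Definition kl_id (t : PMonad) (A : Type) : A -> papp (mT t) A :=
  fun a => existT (fun i => dir (mT t) i -> A) (onPos (mEta t) tt) (fun _ => a).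

(** Kleisli composition "f then g": mu_C o t(g) o f. *)
Definition kl_comp (t : PMonad) {A B C : Type}
  (f : A -> papp (mT t) B) (g : B -> papp (mT t) C) : A -> papp (mT t) C :=
  fun a =>
    pmapMor (mMu t) (X := C)
      (existT (fun ik : pos (tri (mT t) (mT t)) => dir (tri (mT t) (mT t)) ik -> C)
         (existT (fun i => dir (mT t) i -> pos (mT t)) (projT1 (f a))
            (fun d => projT1 (g (projT2 (f a) d))))
         (fun w => projT2 (g (projT2 (f a) (projT1 w))) (projT2 w))).

Definition bijective {X Y : Type} (f : X -> Y) : Prop :=
  exists g : Y -> X, (forall x, g (f x) = x) /\ (forall y, f (g y) = y).

(* A position of h^t_{A,B} = [A y, t <| B y] is a morphism A y -> t <| B y;
   since A y has only trivial directions, it is nothing but its action on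
   positions, a Kleisli map A -> t(B).  Its directions over a : A are the
   directions of t at the chosen position.  Composition therefore acts on
   positions by Kleisli composition, and on directions by pulling a direction
   of the composite back along the directions map of mu to a pair of
   directions of the two factors.

   With these, each enriched-category axiom
   reduces, fiber by fiber, to the image of the corresponding monad law
   (left unit, right unit, associativity) evaluated at a single position of
   t <| t (resp. t <| t <| t).  Finally, global elements y -> h^t_{A,B} are
   exactly Kleisli maps, and under this bijection the enriched identities and
   composition become, by computation, the Kleisli ones. *)

From Stdlib Require Import FunctionalExtensionality.

Definition fiber {p q : Poly} (f : Pmor p q) (i : pos p)
  : {j : pos q & dir q j -> dir p i} :=
  existT (fun j => dir q j -> dir p i) (onPos f i) (onDir f i).

Definition ofFibers {p q : Poly} (h : forall i : pos p, {j : pos q & dir q j -> dir p i})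
  : Pmor p q :=
  mkPmor (fun i => projT1 (h i)) (fun i => projT2 (h i)).

Lemma fiber_eq {p q : Poly} {f g : Pmor p q} (H : f = g) (i : pos p) :
  fiber f i = fiber g i.
Proof. now rewrite H. Qed.

Lemma ofFibers_fiber (p q : Poly) (f : Pmor p q) : ofFibers (fiber f) = f.
Proof. destruct f; reflexivity. Qed.

Lemma Pmor_ext (p q : Poly) (f g : Pmor p q) :
  (forall i, fiber f i = fiber g i) -> f = g.
Proof.
  intros H.
  rewrite <- (ofFibers_fiber _ _ f), <- (ofFibers_fiber _ _ g).
  f_equal. apply functional_extensionality_dep. exact H.
Qed.

Lemma unit_valued_trivial {S : Type} {P : S -> Type} (o : forall s, P s -> unit) :
  o = fun _ _ => tt.
Proof.
  apply functional_extensionality_dep; intros s.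
  apply functional_extensionality; intros e. destruct (o s e); reflexivity.
Qed.

Lemma lin_mor_eta (A : Type) (q : Poly) (phi : Pmor (linP A) q) :
  phi = mkPmor (p := linP A) (q := q) (onPos phi) (fun _ _ => tt).
Proof. destruct phi as [f o]; cbn. f_equal. apply unit_valued_trivial. Qed.

Lemma sigT_eta_fun {S X : Type} {P : S -> Type} (k : {s : S & P s} -> X) :
  (fun w => k (existT P (projT1 w) (projT2 w))) = k.
Proof. apply functional_extensionality; intros [s x]; reflexivity. Qed.

Lemma ihom_lin_fiber_ext (A X : Type) (q : Poly) (phi psi : Pmor (linP A) q)
  (k : dir (ihom (linP A) q) phi -> X) (l : dir (ihom (linP A) q) psi -> X) :
  (forall a : A,
     existT (fun z => dir q z -> X) (onPos phi a) (fun e => k (existT _ a e))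
     = existT (fun z => dir q z -> X) (onPos psi a) (fun e => l (existT _ a e))) ->
  existT (fun phi => dir (ihom (linP A) q) phi -> X) phi k
  = existT (fun phi => dir (ihom (linP A) q) phi -> X) psi l.
Proof.
  intros H.
  set (glue := fun g : A -> {z : pos q & dir q z -> X} =>
    existT (fun phi => dir (ihom (linP A) q) phi -> X)
      (mkPmor (p := linP A) (q := q) (fun a => projT1 (g a)) (fun _ _ => tt))
      (fun w => projT2 (g (projT1 w)) (projT2 w))).
  assert (Hglue : forall (chi : Pmor (linP A) q) (m : dir (ihom (linP A) q) chi -> X),
    glue (fun a => existT (fun z => dir q z -> X) (onPos chi a) (fun e => m (existT _ a e)))
    = existT _ chi m).
  { intros [f o] m. unfold glue; cbn.
    pose proof (unit_valued_trivial o) as Ho; subst o.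
    f_equal. apply sigT_eta_fun. }
  refine (eq_trans (eq_sym (Hglue phi k)) (eq_trans _ (Hglue psi l))).
  f_equal. apply functional_extensionality_dep. exact H.
Qed.

Lemma ihom_lin_ext (A : Type) (p q : Poly) (F G : Pmor p (ihom (linP A) q)) :
  (forall i a,
     existT (fun z => dir q z -> dir p i) (onPos (onPos F i) a)
       (fun e => onDir F i (existT _ a e))
     = existT (fun z => dir q z -> dir p i) (onPos (onPos G i) a)
       (fun e => onDir G i (existT _ a e))) ->
  F = G.
Proof.
  intros H. apply Pmor_ext. intros i. apply ihom_lin_fiber_ext. apply H.
Qed.

Lemma sigT_eta_pair {S X : Type} {P : S -> Type} {B : Type}
  (z : {s : S & P s -> B}) (v : {d : P (projT1 z) & unit} -> X) :
  existT (fun z => {d : P (projT1 z) & unit} -> X)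
    (existT (fun s => P s -> B) (projT1 z) (fun d => projT2 z d))
    (fun e => v (existT _ (projT1 e) (projT2 e)))
  = existT (fun z => {d : P (projT1 z) & unit} -> X) z v.
Proof. destruct z; cbn. f_equal. apply sigT_eta_fun. Qed.

Section KleisliEnrichment.
Variable t : PMonad.
Notation T := (mT t).

Definition kleisliMor {A B : Type} (g : A -> papp T B) : Pmor (linP A) (tri T (linP B)) :=
  mkPmor (p := linP A) (q := tri T (linP B)) g (fun _ _ => tt).

(* Enriched composition h^t_{A,B} (x) h^t_{B,C} -> h^t_{A,C}: Kleisli
   composition on positions; a direction of the composite over a is sent by
   mu to a direction d of t at phi(a) and a direction of t at psi(phi(a) d). *)
Definition kleisliComp : CompFam t := fun A B C =>
  mkPmor (p := tens (hom t A B) (hom t B C)) (q := hom t A C)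
    (fun ij => kleisliMor (kl_comp t (onPos (fst ij)) (onPos (snd ij))))
    (fun ij w =>
       let phi := fst ij in let psi := snd ij in
       let a := projT1 w in let u := projT2 (projT2 w) in
       let m := onDir (mMu t)
                  (existT (fun i => dir T i -> pos T) (projT1 (onPos phi a))
                     (fun d => projT1 (onPos psi (projT2 (onPos phi a) d))))
                  (projT1 (projT2 w)) in
       (existT (fun a => {d : dir T (projT1 (onPos phi a)) & unit}) a
          (existT (fun d => unit) (projT1 m) u),
        existT (fun b => {d : dir T (projT1 (onPos psi b)) & unit})
          (projT2 (onPos phi a) (projT1 m)) (existT (fun d => unit) (projT2 m) u))).

(* Left unit law; it is the left unit law of the monad read off at the
   position (eta, const s) of y <| t, with s the t-position of phi(a).
   [Psi] turns a fiber of mu at that position into the fiber of the composite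
   at (id, phi) over a. *)
Lemma kleisliComp_unitL (A B : Type) :
  Pseq (tensM (encId t A) (pid (hom t A B))) (kleisliComp A A B) = tensL (hom t A B).
Proof.
  apply ihom_lin_ext. intros [[] phi] a. cbn.
  set (s := projT1 (onPos phi a)).
  pose proof (fiber_eq (mUnitL t) (existT (fun _ : unit => unit -> pos T) tt (fun _ => s)))
    as H.
  set (X := (unit * {i : A & {_ : dir T (projT1 (onPos phi i)) & unit}})%type).
  set (Y := {_ : unit & dir T s}) in H.
  set (Psi := fun q : {s' : pos T & dir T s' -> Y} =>
     let (s', f) := q in
     existT (fun z : {i : pos T & dir T i -> B} => {_ : dir T (projT1 z) & unit} -> X)
       (existT (fun i => dir T i -> B) s' (fun d => projT2 (onPos phi a) (projT2 (f d))))
       (fun de => (tt, existT (fun b : A => {_ : dir T (projT1 (onPos phi b)) & unit}) a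
            (existT (fun _ : dir T s => unit) (projT2 (f (projT1 de))) (projT2 de))))).
  exact (eq_trans (f_equal Psi H) (sigT_eta_pair (onPos phi a) _)).
Qed.

(* Right unit law, from the right unit law of the monad at (s, const eta). *)
Lemma kleisliComp_unitR (A B : Type) :
  Pseq (tensM (pid (hom t A B)) (encId t B)) (kleisliComp A B B) = tensR (hom t A B).
Proof.
  apply ihom_lin_ext. intros [phi []] a. cbn.
  set (s := projT1 (onPos phi a)).
  pose proof (fiber_eq (mUnitR t) (existT (fun i : pos T => dir T i -> unit) s (fun _ => tt)))
    as H.
  set (X := ({i : A & {_ : dir T (projT1 (onPos phi i)) & unit}} * unit)%type).
  set (Y := {_ : dir T s & unit}) in H.
  set (Psi := fun q : {s' : pos T & dir T s' -> Y} =>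
     let (s', f) := q in
     existT (fun z : {i : pos T & dir T i -> B} => {_ : dir T (projT1 z) & unit} -> X)
       (existT (fun i => dir T i -> B) s' (fun d => projT2 (onPos phi a) (projT1 (f d))))
       (fun de => (existT (fun b : A => {_ : dir T (projT1 (onPos phi b)) & unit}) a
            (existT (fun _ : dir T s => unit) (projT1 (f (projT1 de))) (projT2 de)), tt))).
  exact (eq_trans (f_equal Psi H) (sigT_eta_pair (onPos phi a) _)).
Qed.

(* Associativity, from the associativity of mu at the position of
   (t <| t) <| t determined by phi(a), psi and chi. *)
Lemma kleisliComp_assoc (A B C D : Type) :
  Pseq (tensM (kleisliComp A B C) (pid (hom t C D))) (kleisliComp A C D)
  = Pseq (tensA (hom t A B) (hom t B C) (hom t C D))
         (Pseq (tensM (pid (hom t A B)) (kleisliComp B C D)) (kleisliComp A B D)).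
Proof.
  apply ihom_lin_ext. intros [[phi psi] chi] a. cbn.
  set (s := projT1 (onPos phi a)).
  set (k := projT2 (onPos phi a)).
  set (x := existT (fun ik : pos (tri T T) => dir (tri T T) ik -> pos T)
             (existT (fun i => dir T i -> pos T) s (fun d => projT1 (onPos psi (k d))))
             (fun w => projT1 (onPos chi (projT2 (onPos psi (k (projT1 w))) (projT2 w))))).
  pose proof (fiber_eq (mAssoc t) x) as H.
  set (X := (({i : A & {_ : dir T (projT1 (onPos phi i)) & unit}}
             * {i : B & {_ : dir T (projT1 (onPos psi i)) & unit}})
             * {i : C & {_ : dir T (projT1 (onPos chi i)) & unit}})%type).
  set (Y := dir (tri (tri T T) T) x) in H.
  set (Psi := fun q : {s' : pos T & dir T s' -> Y} =>
     let (s', f) := q in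
     existT (fun z : {i : pos T & dir T i -> D} => {_ : dir T (projT1 z) & unit} -> X)
       (existT (fun i => dir T i -> D) s'
          (fun e => projT2 (onPos chi (projT2 (onPos psi (k (projT1 (projT1 (f e)))))
                                         (projT2 (projT1 (f e))))) (projT2 (f e))))
       (fun de =>
          ((existT (fun b : A => {_ : dir T (projT1 (onPos phi b)) & unit}) a
              (existT (fun _ : dir T s => unit) (projT1 (projT1 (f (projT1 de)))) (projT2 de)),
            existT (fun b : B => {_ : dir T (projT1 (onPos psi b)) & unit})
              (k (projT1 (projT1 (f (projT1 de)))))
              (existT (fun _ => unit) (projT2 (projT1 (f (projT1 de)))) (projT2 de))),
           existT (fun b : C => {_ : dir T (projT1 (onPos chi b)) & unit})
              (projT2 (onPos psi (k (projT1 (projT1 (f (projT1 de))))))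
                      (projT2 (projT1 (f (projT1 de)))))
              (existT (fun _ => unit) (projT2 (f (projT1 de))) (projT2 de))))).
  exact (f_equal Psi H).
Qed.

Definition toKleisli {A B : Type} (f : Pmor yP (hom t A B)) : A -> papp T B :=
  onPos (onPos f tt).

Definition ofKleisli {A B : Type} (g : A -> papp T B) : Pmor yP (hom t A B) :=
  mkPmor (p := yP) (q := hom t A B) (fun _ => kleisliMor g) (fun _ _ => tt).

Lemma ofKleisli_toKleisli (A B : Type) (f : Pmor yP (hom t A B)) : ofKleisli (toKleisli f) = f.
Proof.
  destruct f as [f o]. pose proof (unit_valued_trivial o) as Ho; subst o.
  assert (Hf : (fun _ : unit => kleisliMor (onPos (f tt))) = f).
  { apply functional_extensionality; intros []. symmetry. apply lin_mor_eta. }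
  exact (f_equal (fun g => mkPmor (p := yP) (q := hom t A B) g (fun _ _ => tt)) Hf).
Qed.

Lemma toKleisli_bijective (A B : Type) : bijective (@toKleisli A B).
Proof.
  exists ofKleisli. split.
  - apply ofKleisli_toKleisli.
  - reflexivity.
Qed.
End KleisliEnrichment.

Theorem mainTheorem1 :
  forall t : PMonad,
  exists comp : CompFam t,
    is_enriched comp /\
    exists Phi : forall A B : Type, Pmor yP (hom t A B) -> (A -> papp (mT t) B),
      (forall A B : Type, bijective (Phi A B)) /\
      (forall A : Type, Phi A A (encId t A) = kl_id t A) /\
      (forall (A B C : Type) (f : Pmor yP (hom t A B)) (g : Pmor yP (hom t B C)),
          Phi A C (ucomp comp f g) = kl_comp t (Phi A B f) (Phi B C g)).
Proof.
  intros t. exists (kleisliComp t). split.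
  - exact (conj (kleisliComp_unitL t) (conj (kleisliComp_unitR t) (kleisliComp_assoc t))).
  - exists (@toKleisli t). split; [exact (toKleisli_bijective t) | split].
    + intros A. reflexivity.
    + intros A B C f g. reflexivity.
Qed.
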